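(* Let $n\geq 2$, $a>1$, and let $u'':[1,a]\to[0,\infty)$ satisfy $u''(x)\geq k(x-1)(a-x)$ on $[1,a]$ for a constant $k>0$. Let $1<b_\infty<b_0<a$ be constants and suppose $b:[0,T)\to\mathbb{R}$ solves the initial value problem $b(0)=b_0$, $$\dot b=-\frac{k\,b_\infty(b_\infty-1)(a^2-b_0^2)(b-b_\infty)b^3}{a(a^2-b_\infty^2)(2a^2-b_\infty^2)^2}.$$ Then $$g_t(y):=\sqrt{\frac{a^2-b^2}{a^2-b_\infty^2}y^2+b^2},\qquad b=b(t),$$ is a sub-solution of the equation $$\dot h=u''(h(y))\left(\frac{h''}{1+h'^2}+(n-1)\frac{yh'-h}{y^2+h^2}\right)$$ for $y\in\left[-\sqrt{a^2-b_\infty^2},\sqrt{a^2-b_\infty^2}\right]$, in the sense that $\dot g_t-u''(g_t)\left(\frac{g_t''}{1+g_t'^2}+(n-1)\frac{yg_t'-g_t}{y^2+g_t^2}\right)\geq 0$ there.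
   Context: Dots denote $t$-derivatives and primes denote $y$-derivatives. The function $u''$ comes from a Calabi-symmetric K\''ahler form on the blowup of $\mathbb{P}^n$ at a point, expressed in the Legendre coordinate $x\in[1,a]$. *)

From Stdlib Require Import Reals.
From Coquelicot Require Import Coquelicot.
Open Scope R_scope.

Definition gbar (a binf : R) (b : R -> R) (t y : R) : R :=
  sqrt ((a ^ 2 - (b t) ^ 2) / (a ^ 2 - binf ^ 2) * y ^ 2 + (b t) ^ 2).

Definition flow_op (n : nat) (upp : R -> R) (h : R -> R) (y : R) : R :=
  upp (h y) * (Derive_n h 2 y / (1 + (Derive h y) ^ 2)
               + (INR n - 1) * (y * Derive h y - h y) / (y ^ 2 + (h y) ^ 2)).

(* Along the ODE, w = b - binf satisfies w' = - K b^3 w, so while b stays in (binf, b0]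
   it decays at most like exp (- K b0^3 t); a continuity argument therefore keeps b in
   (binf, b0] on [0, T).
   For fixed t, g is the hyperbola sqrt (c y^2 + b^2), c = (a^2 - b^2)/(a^2 - binf^2) in [0, 1],
   through (+-sqrt (a^2 - binf^2), a).  With P = g^2 + c^2 y^2 and Q = y^2 + g^2 <= 2a^2 - binf^2
   its curvature term is at most -(1 - c) b^4 / (g P Q), whereas u''(g) >= k (binf - 1) (a - g)
   and a - g >= (a^2 - b0^2) (a^2 - binf^2 - y^2) / (2 a (a^2 - binf^2)).  The constant of the
   ODE is chosen so that these bounds make u''(g) times the curvature term dominate
   dg/dt = b b' (a^2 - binf^2 - y^2) / ((a^2 - binf^2) g). *)

From Stdlib Require Import Reals Lra Psatz Classical.
From Coquelicot Require Import Coquelicot.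
Open Scope R_scope.

Lemma le_of_derive_nonneg (f df : R -> R) (x y : R) :
  x <= y ->
  (forall u, x <= u <= y -> is_derive f u (df u)) ->
  (forall u, x <= u <= y -> 0 <= df u) ->
  f x <= f y.
Proof.
intros [Hxy | <-] Hder Hpos; [|lra].
destruct (MVT_cor2 f df x y Hxy) as [c [Hc Hcxy]].
- intros c Hc. apply is_derive_Reals, Hder, Hc.
- assert (0 <= df c) by (apply Hpos; lra). nra.
Qed.

Lemma gronwall_lower_bound (w dw : R -> R) (L s : R) :
  0 <= s ->
  (forall u, 0 <= u <= s -> is_derive w u (dw u)) ->
  (forall u, 0 <= u <= s -> - L * w u <= dw u) ->
  w 0 * exp (- (L * s)) <= w s.
Proof.
intros Hs Hder Hdw.
assert (Hmono : w 0 * exp (L * 0) <= w s * exp (L * s)).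
{ apply (le_of_derive_nonneg (fun u => w u * exp (L * u)) (fun u => (dw u + L * w u) * exp (L * u)));
    [exact Hs | |].
  - intros u Hu. auto_derive; [exists (dw u); apply Hder, Hu|].
    replace (Derive (fun x => w x) u) with (dw u)
      by (symmetry; apply is_derive_unique, Hder, Hu).
    ring.
  - intros u Hu. apply Rmult_le_pos; [specialize (Hdw u Hu); lra | apply Rlt_le, exp_pos]. }
rewrite Rmult_0_r, exp_0, Rmult_1_r in Hmono.
assert (Hinv : exp (L * s) * exp (- (L * s)) = 1)
  by (rewrite <- exp_plus, Rplus_opp_r; apply exp_0).
apply Rle_trans with (w s * exp (L * s) * exp (- (L * s))).
- apply Rmult_le_compat_r; [apply Rlt_le, exp_pos | exact Hmono].
- rewrite Rmult_assoc, Hinv. lra.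
Qed.

Lemma positive_of_uniform_lower_bound (w : R -> R) (delta t : R) :
  0 < delta -> 0 < w 0 ->
  (forall x, 0 <= x <= t -> continuity_pt w x) ->
  (forall s, 0 <= s <= t -> (forall u, 0 <= u <= s -> 0 < w u) -> delta <= w s) ->
  forall u, 0 <= u <= t -> 0 < w u.
Proof.
intros Hdelta Hw0 Hcont Hbound u Hu.
set (S := fun s => 0 <= s <= t /\ forall u, 0 <= u <= s -> 0 < w u).
assert (HS0 : S 0) by (split; [lra | intros v Hv; replace v with 0 by lra; exact Hw0]).
destruct (completeness S) as [m [Hub Hlub]].
{ exists t. intros s [Hs _]. lra. }
{ exists 0. exact HS0. }
assert (Hm : 0 <= m <= t) by (split; [apply Hub, HS0 | apply Hlub; intros s [Hs _]; lra]).
assert (Hdelta2 : 0 < delta / 2) by lra.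
destruct (proj1 (continuity_pt_locally w m) (Hcont m Hm) (mkposreal _ Hdelta2))
  as [eta Heta]; simpl in Heta.
assert (Hclose : forall x, Rabs (x - m) < eta -> Rabs (w x - w m) < delta / 2)
  by (intros x Hx; apply Heta, Hx).
assert (Heta0 := cond_pos eta).
destruct (classic (exists s, S s /\ m - eta < s)) as [[s [[Hs Hpos] Hsm]] | Hnone].
2: { assert (m <= m - eta); [|lra].
     apply Hlub. intros s Hs. apply Rnot_lt_le. intros Hlt. apply Hnone. exists s. auto. }
assert (Hsm' : s <= m) by (apply Hub; split; assumption).
assert (Hws := Hbound s Hs Hpos).
assert (Hnear : forall x, s <= x < m + eta -> 0 < w x).
{ intros x Hx.
  assert (Hx' := Hclose x ltac:(apply Rabs_def1; lra)).
  assert (Hs' := Hclose s ltac:(apply Rabs_def1; lra)).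
  apply Rabs_def2 in Hx'. apply Rabs_def2 in Hs'. lra. }
set (t' := Rmin t (m + eta / 2)).
assert (Ht' : S t').
{ split; [unfold t'; split; [apply Rmin_glb; lra | apply Rmin_l]|].
  intros v Hv. destruct (Rle_or_lt v s) as [Hvs | Hvs].
  - apply Hpos. lra.
  - apply Hnear. assert (t' <= m + eta / 2) by apply Rmin_r. lra. }
assert (Htt : t' = t).
{ assert (t' <= m) by (apply Hub, Ht').
  unfold t' in *. destruct (Rle_dec t (m + eta / 2)).
  - apply Rmin_left; assumption.
  - rewrite Rmin_right in *; lra. }
destruct Ht' as [_ Hpos']. apply Hpos'. lra.
Qed.

Section DecayToEquilibrium.

Variables (K binf b0 T : R) (b : R -> R).
Hypotheses (HK : 0 < K) (Hbinf : 0 < binf) (Hb0 : binf < b0) (Hinit : b 0 = b0)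
  (Hode : forall t, 0 <= t < T -> is_derive b t (- (K * (b t - binf) * b t ^ 3))).

Lemma ode_le_init s :
  0 <= s < T -> (forall u, 0 <= u <= s -> binf < b u) -> b s <= b0.
Proof.
intros Hs Habove.
enough (- b 0 <= - b s) by lra.
apply (le_of_derive_nonneg (fun u => - b u) (fun u => K * (b u - binf) * b u ^ 3)); [lra | |].
- intros u Hu. replace (K * (b u - binf) * b u ^ 3) with (- - (K * (b u - binf) * b u ^ 3)) by ring.
  exact (is_derive_opp b u _ (Hode u ltac:(lra))).
- intros u Hu. assert (Hbu := Habove u Hu).
  apply Rmult_le_pos; [nra | apply pow_le; lra].
Qed.

Lemma ode_exp_lower_bound s :
  0 <= s < T -> (forall u, 0 <= u <= s -> binf < b u) ->
  (b0 - binf) * exp (- (K * b0 ^ 3 * s)) <= b s - binf.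
Proof.
intros Hs Habove. rewrite <- Hinit.
apply (gronwall_lower_bound (fun u => b u - binf) (fun u => - (K * (b u - binf) * b u ^ 3)));
  [lra | |].
- intros u Hu. replace (- (K * (b u - binf) * b u ^ 3))
    with (- (K * (b u - binf) * b u ^ 3) - 0) by ring.
  exact (is_derive_minus b (fun _ => binf) u _ _ (Hode u ltac:(lra)) (is_derive_const binf u)).
- intros u Hu. assert (Hbu := Habove u Hu).
  assert (Hbu0 : b u <= b0) by (apply ode_le_init; [lra | intros v Hv; apply Habove; lra]).
  assert (b u ^ 3 <= b0 ^ 3) by (apply pow_incr; lra).
  assert (0 <= K * (b u - binf) * (b0 ^ 3 - b u ^ 3)) by (apply Rmult_le_pos; nra).
  nra.
Qed.

Lemma ode_solution_bounds t : 0 <= t < T -> binf < b t <= b0.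
Proof.
intros Ht.
assert (Habove : forall u, 0 <= u <= t -> 0 < b u - binf).
{ apply (positive_of_uniform_lower_bound _ ((b0 - binf) * exp (- (K * b0 ^ 3 * t)))).
  - apply Rmult_lt_0_compat; [lra | apply exp_pos].
  - lra.
  - intros x Hx. apply continuity_pt_minus; [|apply continuity_pt_const; intros ??; reflexivity].
    apply derivable_continuous_pt. eexists. apply is_derive_Reals, Hode. lra.
  - intros s Hs Hpos.
    eapply Rle_trans; [|apply ode_exp_lower_bound; [lra | intros u Hu; specialize (Hpos u Hu); lra]].
    apply Rmult_le_compat_l; [lra|].
    assert (Hrate : 0 <= K * b0 ^ 3) by (apply Rmult_le_pos; [lra | apply pow_le; lra]).
    destruct (Rle_lt_or_eq_dec (- (K * b0 ^ 3 * t)) (- (K * b0 ^ 3 * s))) as [Hlt | Heq];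
      [nra | left; apply exp_increasing, Hlt | rewrite Heq; lra]. }
split.
- specialize (Habove t ltac:(lra)). lra.
- apply ode_le_init; [lra|]. intros u Hu. specialize (Habove u Hu). lra.
Qed.

End DecayToEquilibrium.

Section Hyperbola.

Variables (c B : R).
Hypotheses (Hc : 0 <= c) (HB : B <> 0).

Lemma hyperbola_radicand_pos z : 0 < c * z ^ 2 + B ^ 2.
Proof. assert (0 < B ^ 2) by (apply pow2_gt_0; exact HB). nra. Qed.

Lemma Derive_hyperbola z :
  Derive (fun z => sqrt (c * z ^ 2 + B ^ 2)) z = c * z / sqrt (c * z ^ 2 + B ^ 2).
Proof.
apply is_derive_unique.
assert (Hpos := hyperbola_radicand_pos z).
assert (Hsqrt := sqrt_lt_R0 _ Hpos).
auto_derive; [lra|].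
replace (c * (z * (z * 1)) + B * (B * 1)) with (c * z ^ 2 + B ^ 2) by ring.
field. lra.
Qed.

Lemma Derive_n_hyperbola z :
  Derive_n (fun z => sqrt (c * z ^ 2 + B ^ 2)) 2 z = c * B ^ 2 / sqrt (c * z ^ 2 + B ^ 2) ^ 3.
Proof.
change (Derive (fun x => Derive (fun z => sqrt (c * z ^ 2 + B ^ 2)) x) z
        = c * B ^ 2 / sqrt (c * z ^ 2 + B ^ 2) ^ 3).
rewrite (Derive_ext (fun x => Derive (fun z => sqrt (c * z ^ 2 + B ^ 2)) x)
                    (fun x => c * x / sqrt (c * x ^ 2 + B ^ 2)) z Derive_hyperbola).
assert (Hpos := hyperbola_radicand_pos z).
assert (Hsqrt := sqrt_lt_R0 _ Hpos).
assert (Hsq := sqrt_sqrt _ (Rlt_le _ _ Hpos)).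
apply is_derive_unique.
auto_derive; replace (c * (z * (z * 1)) + B * (B * 1)) with (c * z ^ 2 + B ^ 2) by ring;
  [repeat split; lra |].
set (s := sqrt (c * z ^ 2 + B ^ 2)) in *.
replace (B ^ 2) with (s * s - c * z ^ 2) by lra.
field. lra.
Qed.

End Hyperbola.

Lemma is_derive_gbar_time a binf b t y db :
  a ^ 2 - binf ^ 2 <> 0 ->
  0 < (a ^ 2 - b t ^ 2) / (a ^ 2 - binf ^ 2) * y ^ 2 + b t ^ 2 ->
  is_derive b t db ->
  is_derive (fun s => gbar a binf b s y) t
    (b t * db * (a ^ 2 - binf ^ 2 - y ^ 2) / ((a ^ 2 - binf ^ 2) * gbar a binf b t y)).
Proof.
intros HD Hpos Hb.
assert (Hradicand : is_derive (fun s => (a ^ 2 - b s ^ 2) / (a ^ 2 - binf ^ 2) * y ^ 2 + b s ^ 2) t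
                      (2 * b t * db * (a ^ 2 - binf ^ 2 - y ^ 2) / (a ^ 2 - binf ^ 2))).
{ auto_derive; [repeat split; eexists; exact Hb |].
  replace (Derive (fun x => b x) t) with db by (symmetry; apply is_derive_unique, Hb).
  field. exact HD. }
assert (Hsqrt := sqrt_lt_R0 _ Hpos).
replace (b t * db * (a ^ 2 - binf ^ 2 - y ^ 2) / ((a ^ 2 - binf ^ 2) * gbar a binf b t y))
  with (2 * b t * db * (a ^ 2 - binf ^ 2 - y ^ 2) / (a ^ 2 - binf ^ 2) / (2 * gbar a binf b t y))
  by (unfold gbar; field; lra).
exact (is_derive_sqrt _ _ _ Hradicand Hpos).
Qed.

Section SubsolutionInequality.

Variables (a binf b0 k B y G : R).

Let D := a ^ 2 - binf ^ 2.
Let c := (a ^ 2 - B ^ 2) / D.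

Hypotheses (Hbinf : 1 < binf) (HB : binf <= B <= b0) (Hb0 : b0 < a) (Hk : 0 < k)
  (Hy : y ^ 2 <= D) (HG0 : 0 < G) (HG : G ^ 2 = c * y ^ 2 + B ^ 2).

Let P := G ^ 2 + c ^ 2 * y ^ 2.
Let Q := y ^ 2 + G ^ 2.

Let HD : 0 < D.
Proof. unfold D. nra. Qed.

Let Hc : 0 <= c <= 1.
Proof.
unfold c. split.
- apply Rmult_le_pos; [nra | apply Rlt_le, Rinv_0_lt_compat, HD].
- apply Rmult_le_reg_r with D; [exact HD|]. unfold D in *. field_simplify; nra.
Qed.

Let HP : 0 < P.
Proof. unfold P. nra. Qed.

Let HQ : 0 < Q.
Proof. unfold Q. nra. Qed.

Lemma hyperbola_between : B <= G <= a.
Proof.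
assert (c * y ^ 2 <= c * D) by (apply Rmult_le_compat_l; [apply Hc | exact Hy]).
assert (c * D = a ^ 2 - B ^ 2) by (unfold c; field; apply Rgt_not_eq, HD).
split; nra.
Qed.

Lemma a_sub_hyperbola_ge : (a ^ 2 - b0 ^ 2) * (D - y ^ 2) / (2 * a * D) <= a - G.
Proof.
destruct hyperbola_between as [HBG HGa].
assert (Hfactor : (a - G) * (a + G) = (a ^ 2 - B ^ 2) * (D - y ^ 2) / D).
{ replace ((a - G) * (a + G)) with (a ^ 2 - G ^ 2) by ring. rewrite HG.
  unfold c. field. apply Rgt_not_eq, HD. }
assert (Hmono : (a ^ 2 - b0 ^ 2) * (D - y ^ 2) / D <= (a ^ 2 - B ^ 2) * (D - y ^ 2) / D).
{ apply Rmult_le_compat_r; [apply Rlt_le, Rinv_0_lt_compat, HD |].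
  apply Rmult_le_compat_r; [unfold D in *; lra | nra]. }
assert (Hnum : 0 <= (a ^ 2 - b0 ^ 2) * (D - y ^ 2) / D).
{ apply Rmult_le_pos; [apply Rmult_le_pos; unfold D in *; nra |
                        apply Rlt_le, Rinv_0_lt_compat, HD]. }
replace ((a ^ 2 - b0 ^ 2) * (D - y ^ 2) / (2 * a * D))
  with ((a ^ 2 - b0 ^ 2) * (D - y ^ 2) / D / (2 * a)) by (field; split; [apply Rgt_not_eq, HD | lra]).
apply Rmult_le_reg_r with (2 * a); [lra|].
unfold Rdiv at 1. rewrite Rmult_assoc, Rinv_l, Rmult_1_r by lra.
nra.
Qed.

Lemma curvature_term_le (m : R) :
  1 <= m ->
  c * B ^ 2 / G ^ 3 / (1 + (c * y / G) ^ 2) + m * (y * (c * y / G) - G) / (y ^ 2 + G ^ 2)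
  <= - ((B - binf) * (B + binf) * B ^ 4 / (D * G * P * Q)).
Proof.
intros Hm.
assert (HB2 : B ^ 2 = G ^ 2 - c * y ^ 2) by lra.
assert (Hgraph : c * B ^ 2 / G ^ 3 / (1 + (c * y / G) ^ 2) = c * B ^ 2 / (G * P))
  by (unfold P; field; split; nra).
assert (Hnormal : m * (y * (c * y / G) - G) / (y ^ 2 + G ^ 2) = - m * (B ^ 2 / (G * Q)))
  by (rewrite HB2; unfold Q; field; split; nra).
assert (Hcomplement : 1 - c = (B - binf) * (B + binf) / D)
  by (unfold c, D; field; fold D; apply Rgt_not_eq, HD).
assert (HcQP : c * Q - P = - (1 - c) * B ^ 2) by (unfold P, Q; rewrite HB2; ring).
assert (Hcombine : c * B ^ 2 / (G * P) - B ^ 2 / (G * Q)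
                   = - ((B - binf) * (B + binf) * B ^ 4 / (D * G * P * Q))).
{ replace (c * B ^ 2 / (G * P) - B ^ 2 / (G * Q)) with (B ^ 2 * (c * Q - P) / (G * P * Q))
    by (field; lra).
  rewrite HcQP, Hcomplement. field. repeat split; lra. }
assert (Hpos : 0 <= B ^ 2 / (G * Q))
  by (apply Rmult_le_pos; [nra | apply Rlt_le, Rinv_0_lt_compat; nra]).
rewrite Hgraph, Hnormal, <- Hcombine. nra.
Qed.

Lemma curvature_denominators_le : P * Q <= (2 * a ^ 2 - binf ^ 2) ^ 2.
Proof.
destruct hyperbola_between as [HBG HGa].
assert (HPQ : P <= Q) by (unfold P, Q; destruct Hc; assert (c ^ 2 <= 1) by nra; nra).
assert (HQM : Q <= 2 * a ^ 2 - binf ^ 2) by (unfold Q, D in *; nra).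
nra.
Qed.

Lemma reaction_dominates_decay (U : R) :
  k * (G - 1) * (a - G) <= U ->
  k * binf * (binf - 1) * (a ^ 2 - b0 ^ 2) / (a * D * (2 * a ^ 2 - binf ^ 2) ^ 2) * (D - y ^ 2)
  <= U * (B + binf) / (P * Q).
Proof.
intros HU.
destruct hyperbola_between as [HBG HGa].
set (W := (a ^ 2 - b0 ^ 2) * (D - y ^ 2) / (2 * a * D)).
set (M := 2 * a ^ 2 - binf ^ 2).
assert (HW : 0 <= W).
{ unfold W. apply Rmult_le_pos; [apply Rmult_le_pos; unfold D in *; nra |].
  apply Rlt_le, Rinv_0_lt_compat. assert (0 < D) by exact HD. nra. }
assert (HUW : k * (binf - 1) * W <= U).
{ assert (HaG := a_sub_hyperbola_ge). fold W in HaG.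
  assert (k * (binf - 1) * W <= k * (G - 1) * (a - G)); [|lra].
  apply Rmult_le_compat; nra. }
assert (HPQ := curvature_denominators_le). fold M in HPQ.
assert (HPQpos : 0 < P * Q) by (apply Rmult_lt_0_compat; [exact HP | exact HQ]).
assert (Hfrac : 2 * binf / M ^ 2 <= (B + binf) / (P * Q)).
{ apply Rle_trans with (2 * binf / (P * Q)).
  - apply Rmult_le_compat_l; [lra|]. apply Rinv_le_contravar; lra.
  - apply Rmult_le_compat_r; [apply Rlt_le, Rinv_0_lt_compat |]; lra. }
assert (HM : 0 < M) by (unfold M; nra).
replace (k * binf * (binf - 1) * (a ^ 2 - b0 ^ 2) / (a * D * M ^ 2) * (D - y ^ 2))
  with (k * (binf - 1) * W * (2 * binf / M ^ 2))
  by (unfold W; field; split; [lra | split; [apply Rgt_not_eq, HD | lra]]).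
assert (Hrate : 0 <= 2 * binf / M ^ 2)
  by (apply Rmult_le_pos; [lra | apply Rlt_le, Rinv_0_lt_compat; nra]).
replace (U * (B + binf) / (P * Q)) with (U * ((B + binf) / (P * Q))) by (field; lra).
apply Rmult_le_compat; [| exact Hrate | exact HUW | exact Hfrac].
apply Rmult_le_pos; [apply Rmult_le_pos; lra | exact HW].
Qed.

Lemma subsolution_inequality (m : R) (upp : R -> R) :
  1 <= m -> (forall x, 1 <= x <= a -> k * (x - 1) * (a - x) <= upp x) ->
  B * (- (k * binf * (binf - 1) * (a ^ 2 - b0 ^ 2) * (B - binf) * B ^ 3)
       / (a * D * (2 * a ^ 2 - binf ^ 2) ^ 2)) * (D - y ^ 2) / (D * G)
  - upp G * (c * B ^ 2 / G ^ 3 / (1 + (c * y / G) ^ 2)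
         + m * (y * (c * y / G) - G) / (y ^ 2 + G ^ 2)) >= 0.
Proof.
intros Hm Hlower.
destruct hyperbola_between as [HBG HGa].
assert (HU := Hlower G ltac:(lra)).
set (U := upp G) in *.
set (Kc := k * binf * (binf - 1) * (a ^ 2 - b0 ^ 2) / (a * D * (2 * a ^ 2 - binf ^ 2) ^ 2)).
set (Z := (B - binf) * B ^ 4 / (D * G)).
assert (HZ : 0 <= Z).
{ unfold Z. apply Rmult_le_pos; [apply Rmult_le_pos; [lra | apply pow_le; lra] |].
  apply Rlt_le, Rinv_0_lt_compat, Rmult_lt_0_compat; [exact HD | exact HG0]. }
assert (HU0 : 0 <= U) by (assert (0 <= k * (G - 1) * (a - G)) by (apply Rmult_le_pos; nra); lra).
assert (Hcurv := curvature_term_le m Hm).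
assert (Hdecay := reaction_dominates_decay U HU). fold Kc in Hdecay.
replace (B * (- (k * binf * (binf - 1) * (a ^ 2 - b0 ^ 2) * (B - binf) * B ^ 3)
       / (a * D * (2 * a ^ 2 - binf ^ 2) ^ 2)) * (D - y ^ 2) / (D * G))
  with (- (Kc * (D - y ^ 2) * Z))
  by (unfold Kc, Z; field; repeat split; try apply Rgt_not_eq; try exact HD; nra).
assert (Hreact := Rmult_le_compat_l U _ _ HU0 Hcurv).
replace (U * - ((B - binf) * (B + binf) * B ^ 4 / (D * G * P * Q)))
  with (- (U * (B + binf) / (P * Q) * Z)) in Hreact
  by (unfold Z; field; repeat split; lra).
assert (Hdom := Rmult_le_compat_r Z _ _ HZ Hdecay).
lra.
Qed.

End SubsolutionInequality.

Theorem lemma3p2 (n : nat) (a k binf b0 T : R) (upp : R -> R) (b : R -> R) :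
  (2 <= n)%nat -> 1 < a -> 0 < k ->
  (forall x, 1 <= x <= a -> 0 <= upp x) ->
  (forall x, 1 <= x <= a -> k * (x - 1) * (a - x) <= upp x) ->
  1 < binf -> binf < b0 -> b0 < a ->
  0 < T ->
  b 0 = b0 ->
  (forall t, 0 <= t < T ->
     is_derive b t
       (- (k * binf * (binf - 1) * (a ^ 2 - b0 ^ 2) * (b t - binf) * (b t) ^ 3)
        / (a * (a ^ 2 - binf ^ 2) * (2 * a ^ 2 - binf ^ 2) ^ 2))) ->
  forall t y, 0 <= t < T ->
    - sqrt (a ^ 2 - binf ^ 2) <= y <= sqrt (a ^ 2 - binf ^ 2) ->
    Derive (fun s => gbar a binf b s y) t
      - flow_op n upp (gbar a binf b t) y >= 0.
Proof.
(* u'' >= 0 on [1, a] already follows from the lower bound k (x - 1) (a - x). *)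
intros Hn Ha Hk _ Hlower Hbinf Hb0 Hb0a _ Hinit Hode t y Ht Hy.
assert (HD : 0 < a ^ 2 - binf ^ 2) by nra.
set (C := k * binf * (binf - 1) * (a ^ 2 - b0 ^ 2)) in Hode.
set (E := a * (a ^ 2 - binf ^ 2) * (2 * a ^ 2 - binf ^ 2) ^ 2) in Hode.
assert (Hbt : binf < b t <= b0).
{ apply (ode_solution_bounds (C / E) binf b0 T b); [| lra .. | | exact Ht].
  - apply Rdiv_lt_0_compat; [unfold C | unfold E];
      repeat apply Rmult_lt_0_compat; try apply pow_lt; nra.
  - intros s Hs.
    replace (- (C / E * (b s - binf) * b s ^ 3)) with (- (C * (b s - binf) * b s ^ 3) / E)
      by (unfold Rdiv; ring).
    exact (Hode s Hs). }
assert (Hy2 : y ^ 2 <= a ^ 2 - binf ^ 2).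
{ assert (Hsqrt := sqrt_pos (a ^ 2 - binf ^ 2)).
  rewrite <- (pow2_sqrt (a ^ 2 - binf ^ 2)) by lra. nra. }
set (c := (a ^ 2 - b t ^ 2) / (a ^ 2 - binf ^ 2)).
assert (Hc : 0 <= c) by (apply Rmult_le_pos; [nra | apply Rlt_le, Rinv_0_lt_compat, HD]).
assert (Hbt0 : b t <> 0) by lra.
assert (Hpos := hyperbola_radicand_pos c (b t) Hc Hbt0 y).
rewrite (is_derive_unique (fun s : R => gbar a binf b s y) _ _
          (is_derive_gbar_time a binf b t y _ ltac:(lra) Hpos (Hode t Ht))).
unfold flow_op.
change (gbar a binf b t) with (fun z => sqrt (c * z ^ 2 + b t ^ 2)).
rewrite Derive_n_hyperbola, Derive_hyperbola by assumption.
assert (Hsqrt := sqrt_lt_R0 _ Hpos).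
apply (subsolution_inequality a binf b0 k (b t) y); try lra.
- apply pow2_sqrt, Rlt_le, Hpos.
- assert (H2n := le_INR _ _ Hn). simpl in H2n. lra.
- exact Hlower.
Qed.
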